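(* In ASD, let $(\beta^n,A_n)_{n:N}$ be an effective basis for $X$ and $(\gamma^m,D_m)_{m:M}$ an effective basis for $Y$. Then an effective basis for $X\times Y$, indexed by $N\times M$, is given by $$\epsilon^{(n,m)}=\lambda(x,y).\ \beta^nx\wedge\gamma^my,\qquad F_{(n,m)}=\lambda\theta:\Sigma^{X\times Y}.\ D_m\big(\lambda y.A_n(\lambda x.\theta(x,y))\big),$$ i.e. $\theta(x,y)\Leftrightarrow\exists(n,m).\ F_{(n,m)}\theta\wedge\epsilon^{(n,m)}(x,y)$ for every $\theta:\Sigma^{X\times Y}$.
   Context: ASD setting. $\mathcal S$ is a category with finite products and an object $\Sigma$ for which all exponentials $\Sigma^X$ exist; we reason in its simply typed $\lambda$-calculus (terms in a context $\Gamma$). $(\Sigma,\top,\bot,\wedge,\vee)$ is an internal distributive lattice, and each $\Sigma^X$ is a distributive lattice pointwise; on $\Sigma$ equality is written $\Leftrightarrow$. An object $N$ is overt discrete if it has an equality predicate $(=_N):N\times N\to\Sigma$ with $\Gamma\vdash n=m$ iff $\Gamma\vdash(n=_Nm)\Leftrightarrow\top$, and an existential quantifier $\exists_N:\Sigma^N\to\Sigma$ left adjoint to $\Sigma^{!}:\Sigma\to\Sigma^N$ (written $\exists n.\phi n$); products of overt discrete objects are overt discrete. Bases. An effective basis for $X$ indexed by an overt discrete $N$ is a pair of families $n:N\vdash\beta^n:\Sigma^X$ and $n:N\vdash A_n:\Sigma^{\Sigma^X}$ with $\phi=\lambda x.\exists n.\ A_n\phi\wedge\beta^nx$ for all $\phi:\Sigma^X$.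 *)

(* A shallow presentation of the ASD setting as an abstract
   category with finite products and exponentials Sigma^X, with the internal
   simply typed lambda-calculus rendered via generalized elements:
   a term  Gamma |- t : A  is a morphism  Hom Gamma A. *)

Record ASD := {
  Obj : Type;
  Hom : Obj -> Obj -> Type;
  idm : forall A, Hom A A;
  comp : forall {A B C}, Hom B C -> Hom A B -> Hom A C;
  comp_id_l : forall A B (f : Hom A B), comp (idm B) f = f;
  comp_id_r : forall A B (f : Hom A B), comp f (idm A) = f;
  comp_assoc : forall A B C D (h : Hom C D) (g : Hom B C) (f : Hom A B),
      comp h (comp g f) = comp (comp h g) f;
  one : Obj;
  bang : forall A, Hom A one;
  bang_uniq : forall A (f : Hom A one), f = bang A;
  prod : Obj -> Obj -> Obj;
  fst : forall {A B}, Hom (prod A B) A;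
  snd : forall {A B}, Hom (prod A B) B;
  pair : forall {G A B}, Hom G A -> Hom G B -> Hom G (prod A B);
  fst_pair : forall G A B (f : Hom G A) (g : Hom G B), comp fst (pair f g) = f;
  snd_pair : forall G A B (f : Hom G A) (g : Hom G B), comp snd (pair f g) = g;
  pair_uniq : forall G A B (h : Hom G (prod A B)),
      pair (comp fst h) (comp snd h) = h;
  Sig : Obj;
  exp : Obj -> Obj;
  eval : forall {X}, Hom (prod (exp X) X) Sig;
  curry : forall {G X}, Hom (prod G X) Sig -> Hom G (exp X);
  eval_curry : forall G X (f : Hom (prod G X) Sig),
      comp eval (pair (comp (curry f) fst) snd) = f;
  curry_uniq : forall G X (h : Hom G (exp X)),
      curry (comp eval (pair (comp h fst) snd)) = h;
  topS : Hom one Sig;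
  botS : Hom one Sig;
  meetS : Hom (prod Sig Sig) Sig;
  joinS : Hom (prod Sig Sig) Sig;
}.

Arguments Hom C _ _ : rename.
Arguments idm {C} A : rename.
Arguments comp {C A B D} _ _ : rename.
Arguments one {C} : rename.
Arguments bang {C} A : rename.
Arguments prod {C} _ _ : rename.
Arguments fst {C A B} : rename.
Arguments snd {C A B} : rename.
Arguments pair {C G A B} _ _ : rename.
Arguments Sig {C} : rename.
Arguments exp {C} _ : rename.
Arguments eval {C X} : rename.
Arguments curry {C G X} _ : rename.
Arguments topS {C} : rename.
Arguments botS {C} : rename.
Arguments meetS {C} : rename.
Arguments joinS {C} : rename.

Set Implicit Arguments.
Unset Strict Implicit.

Section Ops.
Variable C : ASD.

Definition tt (G : Obj C) : Hom C G Sig := comp topS (bang G).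
Definition ff (G : Obj C) : Hom C G Sig := comp botS (bang G).
Definition meet {G : Obj C} (a b : Hom C G Sig) : Hom C G Sig := comp meetS (pair a b).
Definition join {G : Obj C} (a b : Hom C G Sig) : Hom C G Sig := comp joinS (pair a b).
Definition app {G A : Obj C} (f : Hom C G (exp A)) (a : Hom C G A) : Hom C G Sig :=
  comp eval (pair f a).
Definition lam {G A : Obj C} (b : Hom C (prod G A) Sig) : Hom C G (exp A) := curry b.
Definition leS {G : Obj C} (a b : Hom C G Sig) : Prop := meet a b = a.

End Ops.

Definition distr_lattice (C : ASD) : Prop :=
  forall (G : Obj C) (a b c : Hom C G Sig),
    meet a b = meet b a /\ join a b = join b a /\
    meet a (meet b c) = meet (meet a b) c /\
    join a (join b c) = join (join a b) c /\
    meet a (join a b) = a /\ join a (meet a b) = a /\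
    meet a (tt G) = a /\ join a (ff G) = a /\
    meet a (join b c) = join (meet a b) (meet a c).

(* An overt discrete object N: an equality predicate and an existential
   quantifier exists_N : Sigma^N -> Sigma left adjoint to Sigma^! (internally),
   satisfying the Frobenius law. *)
Record overt_discrete (C : ASD) (N : Obj C) := {
  eqN : Hom C (prod N N) Sig;
  eqN_spec : forall (G : Obj C) (n m : Hom C G N),
      n = m <-> comp eqN (pair n m) = tt G;
  exN : Hom C (exp N) Sig;
  exN_adj : forall (G : Obj C) (phi : Hom C (prod G N) Sig) (s : Hom C G Sig),
      leS (comp exN (lam phi)) s <-> leS phi (comp s fst);
  exN_frob : forall (G : Obj C) (phi : Hom C (prod G N) Sig) (s : Hom C G Sig),
      meet (comp exN (lam phi)) s = comp exN (lam (meet phi (comp s fst)))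
}.

Definition ex {C : ASD} {N G : Obj C} (od : overt_discrete N)
  (phi : Hom C (prod G N) Sig) : Hom C G Sig := comp (exN od) (lam phi).

(* Effective basis (beta^n, A_n)_{n:N} for X:
   for all phi : Sigma^X (in any context G),
   phi = lambda x. exists n. A_n phi /\ beta^n x. *)
Definition effective_basis {C : ASD} {N X : Obj C} (od : overt_discrete N)
  (beta : Hom C N (exp X)) (A : Hom C N (exp (exp X))) : Prop :=
  forall (G : Obj C) (phi : Hom C G (exp X)),
    phi = lam (G := G) (A := X)
            (ex (G := prod G X) od
               (meet (app (comp A snd) (comp phi (comp fst fst)))
                     (app (comp beta snd) (comp snd fst)))).

Definition prod_basis_eps {C : ASD} {N M X Y : Obj C}
  (beta : Hom C N (exp X)) (gamma : Hom C M (exp Y)) :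
  Hom C (prod N M) (exp (prod X Y)) :=
  lam (G := prod N M) (A := prod X Y)
    (meet (app (comp beta (comp fst fst)) (comp fst snd))
          (app (comp gamma (comp snd fst)) (comp snd snd))).

Definition prod_basis_F {C : ASD} {N M X Y : Obj C}
  (A : Hom C N (exp (exp X))) (D : Hom C M (exp (exp Y))) :
  Hom C (prod N M) (exp (exp (prod X Y))) :=
  (* context C0 = (N x M) x Sigma^(X x Y), with nm = fst, theta = snd *)
  lam (G := prod N M) (A := exp (prod X Y))
    (app (comp D (comp snd fst))
       (lam (G := prod (prod N M) (exp (prod X Y))) (A := Y)
          (* context C0 x Y, y = snd *)
          (app (comp A (comp fst (comp fst fst)))
             (lam (G := prod (prod (prod N M) (exp (prod X Y))) Y) (A := X)
                (* context (C0 x Y) x X, x = snd, y = snd o fst,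
                   theta = snd o fst o fst *)
                (app (comp snd (comp fst fst))
                     (pair snd (comp snd fst))))))).

(* Expand theta(x, y) first in the basis of X, with y as a parameter:
   theta(x, y) = exists n. A_n (lambda x'. theta(x', y)) /\ beta^n x.
   The coefficient y |-> A_n (lambda x'. theta(x', y)) is again a predicate on Y,
   so it expands in the basis of Y as exists m. F_(n,m) theta /\ gamma^m y.
   Frobenius moves beta^n x under the inner quantifier, and the two nested
   quantifiers over N and M combine into one over N x M, since both sides are
   characterised by the same adjunction. *)

From Stdlib Require Import Setoid.
Set Implicit Arguments.

Section Cartesian.
Context {C : ASD}.

Lemma comp_assoc_r {A B D E : Obj C} (h : Hom C D E) (g : Hom C B D) (f : Hom C A B) :
  comp (comp h g) f = comp h (comp g f).
Proof. symmetry; apply comp_assoc. Qed.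

Lemma pair_uniq_r {G A B : Obj C} (h : Hom C G (prod A B)) :
  pair (comp fst h) (comp snd h) = h.
Proof. apply pair_uniq. Qed.

Lemma pair_comp {G H A B : Obj C} (f : Hom C G A) (g : Hom C G B) (h : Hom C H G) :
  comp (pair f g) h = pair (comp f h) (comp g h).
Proof.
  rewrite <- (pair_uniq_r (comp (pair f g) h)).
  rewrite !comp_assoc, fst_pair, snd_pair; reflexivity.
Qed.

Lemma pair_fst_snd {A B : Obj C} : pair (@fst C A B) snd = idm _.
Proof. rewrite <- (pair_uniq_r (idm _)), !comp_id_r; reflexivity. Qed.

Lemma meet_comp {G H : Obj C} (a b : Hom C G Sig) (h : Hom C H G) :
  comp (meet a b) h = meet (comp a h) (comp b h).
Proof. unfold meet; rewrite comp_assoc_r, pair_comp; reflexivity. Qed.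

Lemma app_comp {G H A : Obj C} (f : Hom C G (exp A)) (a : Hom C G A) (h : Hom C H G) :
  comp (app f a) h = app (comp f h) (comp a h).
Proof. unfold app; rewrite comp_assoc_r, pair_comp; reflexivity. Qed.

Lemma app_lam_comp {G H A : Obj C} (b : Hom C (prod G A) Sig) (h : Hom C H G)
  (a : Hom C H A) :
  app (comp (lam b) h) a = comp b (pair h a).
Proof.
  unfold app, lam; rewrite <- (eval_curry _ _ _ b) at 2.
  rewrite comp_assoc_r, pair_comp, comp_assoc_r, fst_pair, snd_pair; reflexivity.
Qed.

Lemma app_lam {G A : Obj C} (b : Hom C (prod G A) Sig) (a : Hom C G A) :
  app (lam b) a = comp b (pair (idm _) a).
Proof. rewrite <- app_lam_comp, comp_id_r; reflexivity. Qed.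

Lemma lam_eta {G A : Obj C} (f : Hom C G (exp A)) : lam (app (comp f fst) snd) = f.
Proof. apply curry_uniq. Qed.

Lemma lam_comp {G H A : Obj C} (b : Hom C (prod G A) Sig) (h : Hom C H G) :
  comp (lam b) h = lam (comp b (pair (comp h fst) snd)).
Proof.
  rewrite <- (lam_eta (comp (lam b) h)); f_equal.
  rewrite comp_assoc_r; apply app_lam_comp.
Qed.

Lemma ex_comp {N G H : Obj C} (od : overt_discrete N) (phi : Hom C (prod G N) Sig)
  (h : Hom C H G) :
  comp (ex od phi) h = ex od (comp phi (pair (comp h fst) snd)).
Proof. unfold ex; rewrite comp_assoc_r, lam_comp; reflexivity. Qed.

Lemma ex_meet_r {N G : Obj C} (od : overt_discrete N) (phi : Hom C (prod G N) Sig)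
  (s : Hom C G Sig) :
  meet (ex od phi) s = ex od (meet phi (comp s fst)).
Proof. apply exN_frob. Qed.

Lemma ex_le {N G : Obj C} (od : overt_discrete N) (phi : Hom C (prod G N) Sig)
  (s : Hom C G Sig) :
  leS (ex od phi) s <-> leS phi (comp s fst).
Proof. apply exN_adj. Qed.

End Cartesian.

Hint Rewrite comp_id_l comp_id_r @comp_assoc_r @pair_comp fst_pair snd_pair
  @pair_fst_snd @pair_uniq_r @meet_comp @app_comp @app_lam @lam_comp @ex_comp : asd.

Lemma effective_basis_app {C : ASD} {N X G : Obj C} (od : overt_discrete N)
  (beta : Hom C N (exp X)) (A : Hom C N (exp (exp X))) :
  effective_basis od beta A ->
  forall (phi : Hom C G (exp X)) (a : Hom C G X),
  app phi a = ex od (meet (app (comp A snd) (comp phi fst))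
                          (app (comp beta snd) (comp a fst))).
Proof.
  intros hbasis phi a; rewrite (hbasis _ phi) at 1.
  autorewrite with asd; reflexivity.
Qed.

Section Lattice.
Context {C : ASD}.
Hypothesis HL : distr_lattice C.

Lemma meet_idem {G : Obj C} (a : Hom C G Sig) : meet a a = a.
Proof.
  destruct (HL _ a a a) as (_ & _ & _ & _ & _ & join_absorb & _).
  destruct (HL _ a (meet a a) a) as (_ & _ & _ & _ & meet_absorb & _).
  rewrite <- join_absorb at 2; exact meet_absorb.
Qed.

Lemma leS_refl {G : Obj C} (a : Hom C G Sig) : leS a a.
Proof. apply meet_idem. Qed.

Lemma leS_antisym {G : Obj C} (a b : Hom C G Sig) : leS a b -> leS b a -> a = b.
Proof.
  unfold leS; intros hab hba.
  destruct (HL _ a b b) as (meet_comm & _).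
  rewrite <- hab, meet_comm; exact hba.
Qed.

Lemma leS_comp {G H : Obj C} (a b : Hom C G Sig) (h : Hom C H G) :
  leS a b -> leS (comp a h) (comp b h).
Proof. unfold leS; intro hab; rewrite <- meet_comp, hab; reflexivity. Qed.

Lemma meet_rot {G : Obj C} (a b c : Hom C G Sig) :
  meet (meet a b) c = meet a (meet c b).
Proof.
  destruct (HL _ c b a) as (meet_comm & _).
  destruct (HL _ a b c) as (_ & _ & meet_assoc & _).
  rewrite meet_comm, meet_assoc; reflexivity.
Qed.

Lemma ex_unique {N G : Obj C} (od : overt_discrete N) (phi : Hom C (prod G N) Sig)
  (e : Hom C G Sig) :
  (forall s, leS e s <-> leS phi (comp s fst)) -> e = ex od phi.
Proof.
  intro he; apply leS_antisym.
  - apply he, (ex_le od phi (ex od phi)), leS_refl.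
  - apply (ex_le od phi e), he, leS_refl.
Qed.

Lemma ex_prod {N M K : Obj C} (odN : overt_discrete N) (odM : overt_discrete M)
  (odNM : overt_discrete (prod N M)) (Phi : Hom C (prod K (prod N M)) Sig) :
  ex odNM Phi =
  ex odN (ex odM (comp Phi (pair (comp fst fst) (pair (comp snd fst) snd)))).
Proof.
  symmetry; apply ex_unique; intro s; rewrite !ex_le; split; intro hle.
  - apply (leS_comp (pair (pair fst (comp fst snd)) (comp snd snd))) in hle.
    autorewrite with asd in hle |- *; exact hle.
  - apply (leS_comp (pair (comp fst fst) (pair (comp snd fst) snd))) in hle.
    autorewrite with asd in hle |- *; exact hle.
Qed.

End Lattice.

Theorem lemma8p1 (C : ASD) (HL : distr_lattice C) (N M X Y : Obj C)
  (odN : overt_discrete N) (odM : overt_discrete M)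
  (odNM : overt_discrete (prod N M))
  (beta : Hom C N (exp X)) (A : Hom C N (exp (exp X)))
  (gamma : Hom C M (exp Y)) (D : Hom C M (exp (exp Y))) :
  effective_basis odN beta A ->
  effective_basis odM gamma D ->
  effective_basis odNM (prod_basis_eps beta gamma) (prod_basis_F A D).
Proof.
  intros hX hY G theta.
  rewrite <- (lam_eta theta) at 1; f_equal.
  (* theta_y = lambda x'. theta (x', y), in context G x (X x Y) *)
  set (theta_y := lam (G := prod G (prod X Y))
         (app (comp theta (comp fst fst)) (pair snd (comp snd (comp snd fst))))).
  assert (expand_X : app (comp theta fst) snd = app theta_y (comp fst snd)).
  { unfold theta_y; autorewrite with asd; reflexivity. }
  rewrite expand_X, (effective_basis_app hX); autorewrite with asd.
  (* coef_n = lambda y'. A_n (lambda x'. theta (x', y')), in context (G x (X x Y)) x N *)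
  set (coef_n := lam (G := prod (prod G (prod X Y)) N)
         (app (comp A (comp snd fst))
              (lam (app (comp theta (comp fst (comp fst (comp fst fst))))
                        (pair snd (comp snd fst)))))).
  assert (expand_Y : app (comp A snd) (comp theta_y fst)
                     = app coef_n (comp snd (comp snd fst))).
  { unfold theta_y, coef_n; autorewrite with asd; reflexivity. }
  rewrite expand_Y, (effective_basis_app hY); autorewrite with asd.
  rewrite ex_meet_r, (ex_prod HL odN odM).
  unfold ex; do 4 f_equal.
  unfold coef_n, prod_basis_F, prod_basis_eps; autorewrite with asd.
  apply meet_rot, HL.
Qed.
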